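(* Let $k\ge2$ and let $\mathcal{H}=(V,E)$ be a $k$-uniform linear hypergraph with $n$ vertices satisfying $n\le k^2+k-2$. Then $\mathrm{q}(\mathcal{H})\le \Delta([\mathcal{H}]_2)+1$.
   Context: A hypergraph $\mathcal{H}=(V,E)$ has a finite vertex set $V$ and a finite set $E$ of nonempty subsets of $V$ (hyperedges); linear means distinct hyperedges share at most one vertex; $k$-uniform means every hyperedge has $k$ elements. The 2-section $[\mathcal{H}]_2$ is the simple graph on $V$ where distinct vertices are adjacent iff some hyperedge contains both; $\Delta([\mathcal{H}]_2)$ is its maximum degree. The chromatic index $\mathrm{q}(\mathcal{H})$ is the least number of colors in a coloring of hyperedges where distinct intersecting hyperedges get different colors. *)

From mathcomp Require Import all_boot.
Set Implicit Arguments. Unset Strict Implicit. Unset Printing Implicit Defensive.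

Definition hypergraph (V : finType) (E : {set {set V}}) : Prop :=
  forall e, e \in E -> e != set0.

Definition linear_hg (V : finType) (E : {set {set V}}) : Prop :=
  forall e f, e \in E -> f \in E -> e != f -> #|e :&: f| <= 1.

Definition uniform_hg (V : finType) (k : nat) (E : {set {set V}}) : Prop :=
  forall e, e \in E -> #|e| = k.

Definition sec2_adj (V : finType) (E : {set {set V}}) (u v : V) : bool :=
  (u != v) && [exists e in E, (u \in e) && (v \in e)].

Definition sec2_deg (V : finType) (E : {set {set V}}) (v : V) : nat :=
  #|[set u | sec2_adj E v u]|.

(* maximum degree of the 2-section (0 if V is empty) *)
Definition sec2_maxdeg (V : finType) (E : {set {set V}}) : nat :=
  \max_(v : V) sec2_deg E v.

Definition proper_edge_coloring (V : finType) (E : {set {set V}}) (m : nat)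
  (c : {ffun {set V} -> 'I_m}) : bool :=
  [forall e in E, forall f in E, (e != f) && (e :&: f != set0) ==> (c e != c f)].

Arguments proper_edge_coloring V E m c : clear implicits.
Definition edge_colorable (V : finType) (E : {set {set V}}) (m : nat) : bool :=
  [exists c : {ffun {set V} -> 'I_m}, proper_edge_coloring V E m c].

Lemma edge_colorable_exists (V : finType) (E : {set {set V}}) :
  exists m, edge_colorable E m.
Proof.
exists #|{set V}|; apply/existsP.
exists [ffun e => enum_rank e]; apply/forallP=> e; apply/implyP=> _.
apply/forallP=> f; apply/implyP=> _; apply/implyP=> /andP[nef _].
by rewrite !ffunE (inj_eq enum_rank_inj).
Qed.

Definition chromatic_index (V : finType) (E : {set {set V}}) : nat :=
  ex_minn (edge_colorable_exists E).

From mathcomp Require Import all_boot.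
From mathcomp Require Import zify.
Set Implicit Arguments. Unset Strict Implicit. Unset Printing Implicit Defensive.

(* An edge with at most Delta neighbours can be removed, the rest coloured by
   induction, and the edge given a free colour among Delta + 1.  This fails only
   on a subhypergraph F all of whose edges have more than Delta neighbours.  A
   vertex on r edges has (k-1)r neighbours in the 2-section and
   Delta <= n - 1 <= k^2 + k - 3, which forces Delta = k^2 - 1 and every vertex
   of F to lie on exactly k + 1 edges of F.  Double counting then gives
   |cover F| = k^2, so F is an affine plane of order k: through a point outside
   an edge L passes exactly one edge disjoint from L.  Colouring every edge by
   the edge through a fixed point that equals it or is parallel to it is proper
   and uses k + 1 <= Delta + 1 colours. *)

Definition edges_at (V : finType) (F : {set {set V}}) (x : V) : {set {set V}} :=
  [set f in F | x \in f].

Definition edge_nbrs (V : finType) (F : {set {set V}}) (e : {set V}) :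
    {set {set V}} :=
  [set f in F | (f != e) && (f :&: e != set0)].

Lemma card_bigcup_le (I T : finType) (A : {pred I}) (G : I -> {set T}) :
  #|\bigcup_(i in A) G i| <= \sum_(i in A) #|G i|.
Proof.
elim/big_ind2: _ => [|m X n Y leXm leYn|//]; first by rewrite cards0.
by rewrite (leq_trans (leq_card_setU X Y).1) ?leq_add.
Qed.

Lemma card_bigcup_disjoint (I T : finType) (A : {pred I}) (G : I -> {set T}) :
  {in A &, forall i j, i != j -> [disjoint G i & G j]} ->
  #|\bigcup_(i in A) G i| = \sum_(i in A) #|G i|.
Proof.
move=> disjG; pose GA i : {set T} := if i \in A then G i else set0.
have disjGA i j : i != j -> [disjoint GA i & GA j].
  move=> ij; rewrite /GA; case: ifP => iA; case: ifP => jA; first exact: disjG;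
    by rewrite -setI_eq0 ?setI0 ?set0I.
rewrite big_mkcond -/(GA _) -sum1_card (partition_disjoint_bigcup _ _ disjGA).
rewrite [RHS]big_mkcond; apply: eq_bigr => i _; rewrite sum1_card /GA.
by case: ifP; rewrite ?cards0.
Qed.

Section Incidences.

Variables (V : finType) (F : {set {set V}}).

Lemma sum_card_setI_edges_at (A : {set V}) :
  \sum_(f in F) #|f :&: A| = \sum_(x in A) #|edges_at F x|.
Proof.
transitivity (\sum_(f in F) \sum_(x in A) (x \in f)).
  apply: eq_bigr => f _; rewrite -sum1_card big_mkcond [RHS]big_mkcond.
  by apply: eq_bigr => x _; rewrite !inE andbC; case: (x \in A).
rewrite exchange_big; apply: eq_bigr => x _.
rewrite -sum1_card big_mkcond [RHS]big_mkcond.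
by apply: eq_bigr => f _; rewrite !inE; case: (f \in F).
Qed.

Lemma card_edge_nbrs e :
  e \in F -> #|edge_nbrs F e| + #|e| <= \sum_(x in e) #|edges_at F x|.
Proof.
move=> eF.
have nbrs_sub : edge_nbrs F e \subset \bigcup_(x in e) (edges_at F x :\ e).
  apply/subsetP => f; rewrite !inE => /and3P[fF fe /set0Pn[x]].
  by rewrite inE => /andP[xf xe]; apply/bigcupP; exists x; rewrite // !inE fe fF.
have edges_atD1 x : x \in e -> #|edges_at F x| = #|edges_at F x :\ e| + 1.
  by move=> xe; rewrite (cardsD1 e) !inE eF xe addnC.
rewrite (eq_bigr _ edges_atD1) big_split sum1_card leq_add2r.
exact: leq_trans (subset_leq_card nbrs_sub) (card_bigcup_le _ _).
Qed.

End Incidences.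

Section EdgeColorings.

Variable V : finType.
Implicit Types (F : {set {set V}}) (e f : {set V}).

Lemma proper_edge_coloringP F m (c : {ffun {set V} -> 'I_m}) :
  reflect {in F &, forall e f, e != f -> e :&: f != set0 -> c e != c f}
          (proper_edge_coloring V F m c).
Proof.
apply: (iffP forallP) => [cP e f eF fF ef efn0 | cP e].
  have /implyP/(_ eF)/forallP/(_ f)/implyP/(_ fF)/implyP := cP e.
  by apply; rewrite ef.
apply/implyP=> eF; apply/forallP=> f; apply/implyP=> fF.
by apply/implyP=> /andP[]; apply: cP.
Qed.

Lemma edge_colorable_extend F e m :
  e \in F -> #|edge_nbrs F e| < m ->
  edge_colorable (F :\ e) m -> edge_colorable F m.
Proof.
move=> eF few /existsP[c /proper_edge_coloringP cP].
pose used := [set c f | f in edge_nbrs F e].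
have [col col_free] : exists col, col \notin used.
  apply/existsP; rewrite -negb_forall; apply: contraTN few => /forallP used_all.
  rewrite -leqNgt -[m]card_ord; apply: leq_trans (leq_imset_card c _).
  by apply/subset_leq_card/subsetP => i _; apply: used_all.
have used_nbr f : f \in F -> f != e -> f :&: e != set0 -> c f \in used.
  by move=> fF fe fen0; apply: imset_f; rewrite inE fF fe.
apply/existsP; exists [ffun f => if f == e then col else c f].
apply/proper_edge_coloringP => f g fF gF fg fgn0; rewrite !ffunE.
have [fe | fe] := eqVneq f e; have [ge | ge] := eqVneq g e.
- by rewrite fe ge eqxx in fg.
- by subst f; apply: contraNneq col_free => ->; rewrite used_nbr // setIC.
- by subst g; apply: contraNneq col_free => <-; apply: used_nbr.
- by apply: cP; rewrite // !inE ?fe ?ge.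
Qed.

Lemma edge_colorable_of_map F (T : finType) (c : {set V} -> T) (S : {set T}) m :
  {in F, forall e, c e \in S} -> #|S| <= m.+1 ->
  {in F &, forall e f, e != f -> e :&: f != set0 -> c e != c f} ->
  edge_colorable F m.+1.
Proof.
move=> cS leSm cP; apply/existsP; exists [ffun e => inord (index (c e) (enum S))].
have index_lt e : e \in F -> index (c e) (enum S) < m.+1.
  by move=> eF; apply: leq_trans leSm; rewrite cardE index_mem mem_enum cS.
apply/proper_edge_coloringP => e f eF fF ef efn0; rewrite !ffunE.
apply: contra (cP e f eF fF ef efn0) => /eqP/(congr1 val).
rewrite /= !inordK ?index_lt // => /(congr1 (nth (c e) (enum S))).
by rewrite !nth_index ?mem_enum ?cS // => ->.
Qed.

Lemma chromatic_index_le (E : {set {set V}}) m :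
  edge_colorable E m -> chromatic_index E <= m.
Proof. by rewrite /chromatic_index; case: ex_minnP => n _; apply. Qed.

End EdgeColorings.

Section TwoSection.

Variable V : finType.
Implicit Types (E F : {set {set V}}) (e f : {set V}) (x y : V).

Lemma linear_hg_eq F e f x y :
  linear_hg F -> e \in F -> f \in F -> x != y ->
  x \in e -> y \in e -> x \in f -> y \in f -> e = f.
Proof.
move=> linF eF fF xy xe ye xf yf; apply/eqP; apply: contraT => /(linF e f eF fF).
have /subset_leq_card : [set x; y] \subset e :&: f.
  by apply/subsetP => z; rewrite !inE => /orP[] /eqP ->; apply/andP.
by rewrite cards2 xy => /leq_trans le2 /le2.
Qed.

Lemma linear_hg_subset E F : F \subset E -> linear_hg E -> linear_hg F.
Proof. by move=> /subsetP FE linE e f /FE eE /FE; apply: linE. Qed.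

Lemma uniform_hg_subset k E F : F \subset E -> uniform_hg k E -> uniform_hg k F.
Proof. by move=> /subsetP FE uniE e /FE; apply: uniE. Qed.

Lemma edges_at_subset E F x : F \subset E -> edges_at F x \subset edges_at E x.
Proof.
by move=> /subsetP FE; apply/subsetP => f; rewrite !inE => /andP[/FE -> ->].
Qed.

Lemma sec2_nbhdE F x :
  [set y | sec2_adj F x y] = \bigcup_(f in edges_at F x) (f :\ x).
Proof.
apply/setP => y; rewrite !inE /sec2_adj eq_sym; apply/andP/bigcupP.
  by case=> yx /existsP[f /and3P[fF xf yf]]; exists f; rewrite !inE ?fF ?xf ?yx.
case=> f; rewrite !inE => /andP[fF xf] /andP[yx yf]; split=> //.
by apply/existsP; exists f; rewrite fF xf yf.
Qed.

Lemma sec2_deg_le F x : sec2_deg F x <= #|V|.-1.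
Proof.
rewrite -(cardsC1 x); apply/subset_leq_card/subsetP => y.
by rewrite !inE /sec2_adj eq_sym => /andP[].
Qed.

Lemma sec2_maxdeg_le F : sec2_maxdeg F <= #|V|.-1.
Proof. by apply/bigmax_leqP => x _; apply: sec2_deg_le. Qed.

Lemma sec2_deg_le_maxdeg F x : sec2_deg F x <= sec2_maxdeg F.
Proof. exact: (@leq_bigmax _ (fun v => sec2_deg F v) x). Qed.

Variables (k : nat) (F : {set {set V}}).
Hypotheses (uniF : uniform_hg k F) (linF : linear_hg F).

Lemma card_punctured_star x :
  #|\bigcup_(f in edges_at F x) (f :\ x)| = (k - 1) * #|edges_at F x|.
Proof.
rewrite card_bigcup_disjoint => [|f g]; last first.
  rewrite !inE => /andP[fF xf] /andP[gF xg] fg; rewrite -setI_eq0.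
  apply: contraR fg => /set0Pn[y].
  rewrite !inE => /andP[/andP[yx yf] /andP[_ yg]].
  by apply/eqP; apply: (linear_hg_eq linF fF gF yx).
rewrite mulnC -sum_nat_const; apply: eq_bigr => f; rewrite inE => /andP[fF xf].
by rewrite -(uniF fF) (cardsD1 x f) xf add1n subn1.
Qed.

Lemma sec2_deg_linear x : sec2_deg F x = (k - 1) * #|edges_at F x|.
Proof. by rewrite /sec2_deg sec2_nbhdE card_punctured_star. Qed.

End TwoSection.

Lemma tight_arith k D S :
  1 < k -> (k - 1) * S <= k * D -> D.+1 + k <= S -> S <= k * k.+1 ->
  D = k ^ 2 - 1 /\ S = k * k.+1.
Proof. by move=> k_gt1 kS S_ge S_le; nia. Qed.

Section TightEdges.

Variables (V : finType) (k : nat) (E F : {set {set V}}).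
Hypotheses (k_gt1 : 1 < k) (uniE : uniform_hg k E) (linE : linear_hg E).
Hypotheses (small : #|V| <= k ^ 2 + k - 2) (FE : F \subset E).

Lemma edges_at_le_maxdeg x : (k - 1) * #|edges_at F x| <= sec2_maxdeg E.
Proof.
apply: leq_trans (sec2_deg_le_maxdeg E x); rewrite (sec2_deg_linear uniE linE).
by rewrite leq_mul2l subset_leq_card ?orbT // edges_at_subset.
Qed.

Lemma card_edges_at_le x : #|edges_at F x| <= k.+1.
Proof.
have := leq_trans (edges_at_le_maxdeg x) (sec2_maxdeg_le E).
by move: small; nia.
Qed.

Lemma tight_edge e :
  e \in F -> sec2_maxdeg E < #|edge_nbrs F e| ->
  sec2_maxdeg E = k ^ 2 - 1 /\ {in e, forall x, #|edges_at F x| = k.+1}.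
Proof.
move=> eF many; set S := \sum_(x in e) #|edges_at F x|.
have card_e : #|e| = k by apply: uniE; apply: (subsetP FE).
have S_ge : (sec2_maxdeg E).+1 + k <= S.
  by rewrite -card_e (leq_trans _ (card_edge_nbrs eF)) ?leq_add2r.
have S_le : S <= k * k.+1.
  rewrite (leq_trans (leq_sum _ (fun x _ => card_edges_at_le x))) //.
  by rewrite sum_nat_const card_e.
have kS : (k - 1) * S <= k * sec2_maxdeg E.
  rewrite big_distrr (leq_trans (leq_sum _ (fun x _ => edges_at_le_maxdeg x))) //.
  by rewrite sum_nat_const card_e.
have [-> S_eq] := tight_arith k_gt1 kS S_ge S_le; split=> // x xe.
have := leqif_sum (fun y (_ : y \in e) => leqif_eq (card_edges_at_le y)).
rewrite sum_nat_const card_e -/S S_eq => -[_].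
by rewrite eqxx => /esym/forall_inP/(_ x xe)/eqP.
Qed.

End TightEdges.

Lemma affine_arith k w b :
  0 < k -> w * k.+1 = b * k -> k ^ 2 <= w -> w < k * k.+1 -> w = k ^ 2.
Proof.
move=> k_gt0 count.
have /dvdnP[q ->] : k %| w.
  by rewrite -(@Gauss_dvdl k w k.+1) ?coprimenS //; apply/dvdnP; exists b.
rewrite -mulnn leq_pmul2r // mulnC ltn_pmul2l // ltnS => q_ge q_le.
by rewrite (@anti_leq q k) ?q_ge ?q_le.
Qed.

Section AffinePlane.

Variables (V : finType) (k : nat) (F : {set {set V}}).
Hypotheses (k_gt0 : 0 < k) (uniF : uniform_hg k F) (linF : linear_hg F).
Hypothesis regF : {in cover F, forall x, #|edges_at F x| = k.+1}.
Hypothesis cover_small : #|cover F| < k * k.+1.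

Local Notation star x := (x |: \bigcup_(f in edges_at F x) (f :\ x)).

Lemma mem_cover f x : f \in F -> x \in f -> x \in cover F.
Proof. by move=> fF xf; apply/bigcupP; exists f. Qed.

Lemma card_cover_count : #|cover F| * k.+1 = #|F| * k.
Proof.
have := sum_card_setI_edges_at F (cover F).
rewrite (eq_bigr (fun=> k)) => [|f fF]; last first.
  by rewrite (setIidPl (bigcup_sup _ fF)) uniF.
by rewrite (eq_bigr (fun=> k.+1) regF) !sum_nat_const => ->.
Qed.

Lemma star_sub_cover x : x \in cover F -> star x \subset cover F.
Proof.
move=> xc; apply/subsetP => y /setU1P[-> // | /bigcupP[f]].
by rewrite !inE => /andP[fF _] /andP[_]; apply: mem_cover.
Qed.

Lemma card_star x : x \in cover F -> #|star x| = k ^ 2.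
Proof.
move=> xc; rewrite cardsU1 (card_punctured_star uniF linF) regF //.
have -> : x \notin \bigcup_(f in edges_at F x) (f :\ x).
  by apply/bigcupP => -[f _]; rewrite !inE eqxx.
by move: k_gt0; nia.
Qed.

Lemma card_cover x : x \in cover F -> #|cover F| = k ^ 2.
Proof.
move=> xc; apply: (affine_arith k_gt0 card_cover_count) => //.
by rewrite -(card_star xc) subset_leq_card ?star_sub_cover.
Qed.

Lemma star_cover x : x \in cover F -> star x = cover F.
Proof.
move=> xc; apply/eqP.
by rewrite eqEcard star_sub_cover // card_star // (card_cover xc) leqnn.
Qed.

Lemma card_edges_at2 x y :
  x \in cover F -> y \in cover F -> x != y -> #|edges_at (edges_at F x) y| = 1.
Proof.
move=> xc; rewrite -(star_cover xc) => /setU1P[-> | ]; first by rewrite eqxx.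
case/bigcupP=> f; rewrite !inE => /andP[fF xf] /andP[yx yf] _.
apply/eqP/cards1P; exists f; apply/setP => g; rewrite !inE.
apply/idP/eqP => [/andP[/andP[gF xg] yg] | ->]; last by rewrite fF xf yf.
by apply: (linear_hg_eq linF gF fF yx).
Qed.

Lemma card_parallels L q :
  L \in F -> q \in cover F -> q \notin L ->
  #|[set M in edges_at F q | [disjoint M & L]]| = 1.
Proof.
move=> LF qc qL; set P := edges_at F q.
have meet M : M \in P -> #|M :&: L| = ~~ [disjoint M & L].
  rewrite inE => /andP[MF qM]; have ML : M != L by apply: contraNneq qL => <-.
  rewrite -setI_eq0 -cards_eq0; move: (linF MF LF ML).
  by case: #|_| => [|[|]].
(* The k points of L lie on k distinct edges through q, leaving one of k + 1. *)
have sum_meet : \sum_(M in P) #|M :&: L| = k.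
  rewrite sum_card_setI_edges_at -(uniF LF) -sum1_card; apply: eq_bigr => a aL.
  by rewrite card_edges_at2 ?(mem_cover LF aL) //; apply: contraNneq qL => ->.
have : \sum_(M in P) (1 - #|M :&: L|) = 1.
  rewrite sumnB => [|M MP]; last by rewrite meet //; case: [disjoint _ & _].
  by rewrite sum1_card sum_meet regF // subSnn.
move=> sum_disj; rewrite -sum1_card -[RHS]sum_disj big_mkcond [RHS]big_mkcond.
apply: eq_bigr => M _; rewrite inE; case: (boolP (M \in P)) => //= MP.
by rewrite meet //; case: [disjoint _ & _].
Qed.

Definition parallel_through x e : {set V} :=
  odflt set0 [pick M in edges_at F x | (M == e) || [disjoint M & e]].

Lemma parallel_throughP x e :
  x \in cover F -> e \in F ->
  parallel_through x e \in edges_at F x /\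
  (parallel_through x e == e) || [disjoint parallel_through x e & e].
Proof.
move=> xc eF; rewrite /parallel_through; case: pickP => [M /andP[] // | none].
have [xe | xe] := boolP (x \in e).
  by have := none e; rewrite !inE eF xe eqxx.
have /eqP/cards1P[M parM] := card_parallels eF xc xe.
have := set11 M; rewrite -parM inE => /andP[xM Me].
by have := none M; rewrite xM Me orbT.
Qed.

Lemma parallel_through_proper x :
  x \in cover F ->
  {in F &, forall e f, e != f -> e :&: f != set0 ->
     parallel_through x e != parallel_through x f}.
Proof.
move=> xc e f eF fF ef /set0Pn[q]; rewrite inE => /andP[qe qf].
have [Lx Le] := parallel_throughP xc eF; have [_ Lf] := parallel_throughP xc fF.
apply/eqP => eqL; rewrite -eqL in Lf; set L := parallel_through x e in Lx Le Lf.
have LF : L \in F by move: Lx; rewrite inE => /andP[].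
case/orP: Le => [/eqP Le | Le]; case/orP: Lf => [/eqP Lf | Lf].
- by rewrite -Le -Lf eqxx in ef.
- by have := disjointFr Lf; rewrite Le => /(_ q qe); rewrite qf.
- by have := disjointFr Le; rewrite Lf => /(_ q qf); rewrite qe.
have qL : q \notin L by rewrite (disjointFl Le qe).
have /eqP/cards1P[M parM] := card_parallels LF (mem_cover eF qe) qL.
have par g : g \in F -> q \in g -> [disjoint L & g] -> g = M.
  by move=> gF qg Lg; apply/set1P; rewrite -parM !inE gF qg disjoint_sym.
by rewrite (par e eF qe Le) (par f fF qf Lf) eqxx in ef.
Qed.

Lemma affine_edge_colorable x m :
  x \in cover F -> k <= m -> edge_colorable F m.+1.
Proof.
move=> xc le_km.
apply: (edge_colorable_of_map (c := parallel_through x) (S := edges_at F x)).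
- by move=> e eF; case: (parallel_throughP xc eF).
- by rewrite regF.
- exact: parallel_through_proper.
Qed.

End AffinePlane.

Lemma edge_colorable_subset (V : finType) k (E F : {set {set V}}) :
  1 < k -> uniform_hg k E -> linear_hg E -> #|V| <= k ^ 2 + k - 2 ->
  F \subset E -> edge_colorable F (sec2_maxdeg E).+1.
Proof.
move=> k_gt1 uniE linE small; have [n] := ubnP #|F|.
elim: n F => // n IH F ltFn FE.
have [e /andP[eF few] | tight] :=
  pickP [pred e in F | #|edge_nbrs F e| <= sec2_maxdeg E].
  apply: (edge_colorable_extend eF); rewrite ?ltnS //.
  apply: IH; first by rewrite (cardsD1 e) eF in ltFn.
  exact: subset_trans (subsetDl F [set e]) FE.
have [F0 | [e eF]] := set_0Vmem F.
  rewrite F0; apply/existsP; exists [ffun=> ord0].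
  by apply/proper_edge_coloringP => e; rewrite inE.
have many f : f \in F -> sec2_maxdeg E < #|edge_nbrs F f|.
  by move=> fF; have := tight f; rewrite /= fF ltnNge => /negbT.
have [-> _] := tight_edge k_gt1 uniE linE small FE eF (many e eF).
have [x xe] : exists x, x \in e.
  by apply/set0Pn; rewrite -card_gt0 (uniE e (subsetP FE e eF)); apply: ltnW.
apply: (affine_edge_colorable (k := k) _ _ _ _ _ (mem_cover eF xe)).
- exact: ltnW.
- exact: uniform_hg_subset FE uniE.
- exact: linear_hg_subset FE linE.
- move=> y /bigcupP[f fF yf].
  by have [_ ->] := tight_edge k_gt1 uniE linE small FE fF (many f fF).
- by apply: leq_ltn_trans (max_card _) _; move: small k_gt1; nia.
- by move: k_gt1; nia.
Qed.

Theorem theorem5p2 (k : nat) (V : finType) (E : {set {set V}}) :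
  2 <= k ->
  hypergraph E ->
  uniform_hg k E ->
  linear_hg E ->
  #|V| <= k ^ 2 + k - 2 ->
  chromatic_index E <= sec2_maxdeg E + 1.
Proof.
move=> k_gt1 _ uniE linE small; rewrite addn1; apply: chromatic_index_le.
exact: edge_colorable_subset k_gt1 uniE linE small (subxx E).
Qed.
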